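(* Let $a,b,c\in\mathbb{C}$ with $a\neq0$, $\Re(b)>0$, $\Re(b+a+c)>0$, $\Re(b+a-c)>0$, $\Re(b-a+c)>0$, $\Re(b-a-c)>0$, and $\frac{a+c}{b},\frac{a-c}{b}\notin\{\pm1,\pm3,\pm5,\dots\}$. Fix a square root $\sqrt{a^2-c^2}$, put $\mu=\frac{\sqrt{a^2-c^2}}{2b}$, $\tau_1=\frac12-\frac{a+c}{2b}$, $\tau_2=\frac12-\frac{a-c}{2b}$, $\tau_3=\frac12+\frac{a+c}{2b}$, $\tau_4=\frac12+\frac{a-c}{2b}$, and $Q=(b-a-c)(b+a+c)(b-a+c)(b+a-c)$. Assume $\frac12\pm\mu\notin\mathbb{Z}_0^-$ and $1+\tau_j\notin\mathbb{Z}_0^-$ ($j=1,\dots,4$). Then $$ {}_7F_6\!\left(\begin{matrix}1,\ \frac32-\mu,\ \frac32+\mu,\ \tau_1,\ \tau_2,\ \tau_3,\ \tau_4\\ \frac12-\mu,\ \frac12+\mu,\ 1+\tau_1,\ 1+\tau_2,\ 1+\tau_3,\ 1+\tau_4\end{matrix};\,-1\right) =\frac{\pi Q}{2\,(ab^3-a^3b+abc^2)}\cdot\frac{\cos\!\big(\frac{a\pi}{2b}\big)\cos\!\big(\frac{c\pi}{2b}\big)}{\cos\!\big(\frac{c\pi}{b}\big)+\cos\!\big(\frac{a\pi}{b}\big)} -\frac{Q}{4\,(ab^3-a^3b+abc^2)}\left[\beta\!\left(\frac{a+b+c}{2b}\right)+\beta\!\left(\frac{a+b-c}{2b}\right)\right].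 $$
   Context: $\mathbb{Z}_0^-=\{0,-1,-2,\dots\}$. The Pochhammer symbol is $(\lambda)_0=1$, $(\lambda)_n=\lambda(\lambda+1)\cdots(\lambda+n-1)$ for $n\ge1$. The generalized hypergeometric series is ${}_pF_q\!\left(\begin{matrix}\alpha_1,\dots,\alpha_p\\ \beta_1,\dots,\beta_q\end{matrix};z\right)=\sum_{n=0}^\infty\frac{(\alpha_1)_n\cdots(\alpha_p)_n}{(\beta_1)_n\cdots(\beta_q)_n}\frac{z^n}{n!}$ (with no $\beta_j\in\mathbb{Z}_0^-$). The (lower case) beta function of one variable is $\beta(x)=\sum_{k=0}^\infty\frac{(-1)^k}{k+x}$ for $x\in\mathbb{C}\setminus\mathbb{Z}_0^-$. *)

From Stdlib Require Import Reals List.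
Open Scope R_scope.

Record Cplx : Type := mkC { Re : R ; Im : R }.

Definition RtoC (r : R) : Cplx := mkC r 0.
Definition Cnat (n : nat) : Cplx := RtoC (INR n).
Definition Czero : Cplx := RtoC 0.
Definition Cone : Cplx := RtoC 1.
Definition Ci : Cplx := mkC 0 1.
Definition Cadd (z w : Cplx) : Cplx := mkC (Re z + Re w) (Im z + Im w).
Definition Copp (z : Cplx) : Cplx := mkC (- Re z) (- Im z).
Definition Csub (z w : Cplx) : Cplx := Cadd z (Copp w).
Definition Cmul (z w : Cplx) : Cplx :=
  mkC (Re z * Re w - Im z * Im w) (Re z * Im w + Im z * Re w).
(* multiplicative inverse; (0)^-1 = 0 by convention (never used here) *)
Definition Cinv (z : Cplx) : Cplx :=
  let d := Re z * Re z + Im z * Im z in mkC (Re z / d) (- Im z / d).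
Definition Cdiv (z w : Cplx) : Cplx := Cmul z (Cinv w).
Fixpoint Cpow (z : Cplx) (n : nat) : Cplx :=
  match n with O => Cone | S m => Cmul z (Cpow z m) end.

Declare Scope C_scope.
Delimit Scope C_scope with C.
Infix "+" := Cadd : C_scope.
Infix "-" := Csub : C_scope.
Infix "*" := Cmul : C_scope.
Infix "/" := Cdiv : C_scope.
Notation "- z" := (Copp z) : C_scope.
Infix "^" := Cpow : C_scope.

Definition Cexp (z : Cplx) : Cplx :=
  mkC (exp (Re z) * cos (Im z)) (exp (Re z) * sin (Im z)).
Definition Ccos (z : Cplx) : Cplx :=
  Cdiv (Cadd (Cexp (Cmul Ci z)) (Cexp (Copp (Cmul Ci z)))) (RtoC 2).

Fixpoint poch (l : Cplx) (n : nat) : Cplx :=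
  match n with O => Cone | S m => Cmul (poch l m) (Cadd l (Cnat m)) end.

Definition Cprod (l : list Cplx) : Cplx := fold_right Cmul Cone l.

Definition hyp_term (As Bs : list Cplx) (z : Cplx) (n : nat) : Cplx :=
  Cdiv (Cmul (Cprod (map (fun a => poch a n) As)) (Cpow z n))
       (Cmul (Cprod (map (fun b => poch b n) Bs)) (Cnat (Factorial.fact n))).

Fixpoint Cpartial (f : nat -> Cplx) (n : nat) : Cplx :=
  match n with O => f O | S m => Cadd (Cpartial f m) (f n) end.

Definition Cseries_to (f : nat -> Cplx) (l : Cplx) : Prop :=
  Un_cv (fun n => Re (Cpartial f n)) (Re l) /\
  Un_cv (fun n => Im (Cpartial f n)) (Im l).

(* lower-case beta function: beta x = sum_k (-1)^k/(k+x) (as a convergent series) *)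
Definition beta_term (x : Cplx) (k : nat) : Cplx :=
  Cdiv (Cpow (Copp Cone) k) (Cadd (Cnat k) x).

Definition in_Z0m (z : Cplx) : Prop := exists n : nat, z = Copp (Cnat n).

Definition odd_int (z : Cplx) : Prop :=
  exists k : nat, z = Cnat (2 * k + 1) \/ z = Copp (Cnat (2 * k + 1)).

From Stdlib Require Import Reals List Lra Lia ZArith.
From Coquelicot Require Import
  Rcomplements Hierarchy Continuity Derive RInt RInt_analysis AutoDerive ElemFct Series.
Import ListNotations.
Open Scope R_scope.

(* With [u = (a+c)/(2b)] and [v = (a-c)/(2b)] the parameters are [τ = 1/2 ∓ u, 1/2 ∓ v] and
   [μ^2 = uv], and partial fractions in [x = n + 1/2] turn the [n]-th term of the 7F6 into
   [κ ((-1)^n/(n+1/2-u) - (-1)^n/(n+1/2+u) + (-1)^n/(n+1/2-v) - (-1)^n/(n+1/2+v))].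
   The reflection formula [β(1-x) + β(x) = π / sin (π x)] then gives the value
   [κ (π/cos (πu) + π/cos (πv) - 2 β(1/2+u) - 2 β(1/2+v))].  The reflection formula is the
   partial fraction expansion of [π / sin (π x)], obtained by evaluating at [t = 0] the Fourier
   cosine series of [cos (x t)] on [[0, π]]: its coefficients are O(1/n^2), so the series
   converges, and by Fejér's theorem its Cesàro means converge to [cos 0 = 1]. *)

Lemma Cplx_ext (z w : Cplx) : Re z = Re w -> Im z = Im w -> z = w.
Proof. destruct z, w; simpl; intros; subst; reflexivity. Qed.

Lemma Cplx_norm2_neq0 z : z <> Czero -> Re z * Re z + Im z * Im z <> 0.
Proof. intros Hz E. apply Hz, Cplx_ext; simpl; nra. Qed.

Lemma C_ring : ring_theory Czero Cone Cadd Cmul Csub Copp (@eq Cplx).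
Proof. constructor; intros; apply Cplx_ext; simpl; ring. Qed.

Lemma C_field : field_theory Czero Cone Cadd Cmul Csub Copp Cdiv Cinv (@eq Cplx).
Proof.
  constructor.
  - exact C_ring.
  - intros E. apply (f_equal Re) in E. simpl in E. lra.
  - reflexivity.
  - intros z Hz. apply Cplx_norm2_neq0 in Hz. apply Cplx_ext; simpl; field; exact Hz.
Qed.

Add Field Cfield : C_field.

Lemma Cplx_eq_dec (z w : Cplx) : z = w \/ z <> w.
Proof.
  destruct (Req_dec (Re z) (Re w)), (Req_dec (Im z) (Im w)).
  - left; apply Cplx_ext; assumption.
  all: right; intros ->; auto.
Qed.

Lemma Cmul_integral z w : (z * w)%C = Czero -> z = Czero \/ w = Czero.
Proof.
  intros H. destruct (Cplx_eq_dec z Czero) as [Ez | Ez]; [left; exact Ez | right].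
  replace w with (Cmul (Cinv z) (Cmul z w)) by (field; exact Ez).
  rewrite H. ring.
Qed.

Lemma Cmul_neq0 z w : z <> Czero -> w <> Czero -> (z * w)%C <> Czero.
Proof. intros Hz Hw E. destruct (Cmul_integral z w E); auto. Qed.

Lemma RtoC_2 : RtoC 2 = (Cone + Cone)%C.
Proof. apply Cplx_ext; simpl; ring. Qed.

Lemma RtoC_3 : RtoC 3 = (Cone + Cone + Cone)%C.
Proof. apply Cplx_ext; simpl; ring. Qed.

Lemma RtoC_4 : RtoC 4 = ((Cone + Cone) * (Cone + Cone))%C.
Proof. apply Cplx_ext; simpl; ring. Qed.

Lemma Cnat_0 : Cnat 0 = Czero.
Proof. apply Cplx_ext; reflexivity. Qed.

Lemma Cnat_S n : Cnat (S n) = (Cnat n + Cone)%C.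
Proof. apply Cplx_ext; cbn [Re Im Cnat RtoC Cadd Cone]; [rewrite S_INR | ]; ring. Qed.

Lemma Cnat_IZR n : Cnat n = RtoC (IZR (Z.of_nat n)).
Proof. unfold Cnat. rewrite INR_IZR_INZ. reflexivity. Qed.

Lemma Cnat_fact_neq0 n : Cnat (Factorial.fact n) <> Czero.
Proof.
  intros E. apply (f_equal Re) in E. simpl in E.
  pose proof (lt_0_INR _ (Factorial.lt_O_fact n)). lra.
Qed.

Lemma Cpow_m1 n : ((- Cone) ^ n)%C = RtoC ((-1) ^ n).
Proof. induction n as [|n IH]; simpl; [reflexivity | rewrite IH; apply Cplx_ext; simpl; ring]. Qed.

(* Side conditions [e <> Czero] left by [field]: either [e] has a real part
   that [lra] sees is nonzero, or it is [±] some [e'] with [e' <> Czero] in context. *)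
Ltac Cneq0 :=
  try change (mkC R1 R0) with Cone; try change (mkC R0 R0) with Czero;
  try change (mkC (R1 + R1) (R0 + R0)) with (Cadd Cone Cone);
  let E := fresh "E" in intro E;
  first
  [ apply (f_equal Re) in E; simpl in E; lra
  | match goal with
    | H : ?e' <> Czero |- False =>
        match type of E with ?e = Czero =>
          apply H; first [ transitivity e; [ring | exact E]
                         | transitivity (Copp e); [ring | rewrite E; ring] ] end
    end ].

Ltac Cfield := field; repeat split; first [assumption | Cneq0].

Definition Chalf : Cplx := (Cone / RtoC 2)%C.

Lemma Chalf_double : (Chalf + Chalf)%C = Cone.
Proof. unfold Chalf. rewrite RtoC_2. field. Cneq0. Qed.

Lemma three_halves : (RtoC 3 / RtoC 2)%C = (Chalf + Cone)%C.
Proof. unfold Chalf. rewrite RtoC_2, RtoC_3. field. Cneq0. Qed.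

Lemma Cnat_add_neq0 x n : ~ in_Z0m x -> (Cnat n + x)%C <> Czero.
Proof.
  intros Hx E. apply Hx. exists n.
  replace x with (Csub (Cadd (Cnat n) x) (Cnat n)) by ring. rewrite E. ring.
Qed.

Lemma not_in_Z0m_neq0 z : ~ in_Z0m z -> z <> Czero.
Proof. intros Hz E. apply Hz. exists O. rewrite E, Cnat_0. apply Cplx_ext; simpl; ring. Qed.

Definition Cnot_int (x : Cplx) : Prop := forall k : Z, x <> RtoC (IZR k).

Lemma Cnot_int_sub_Cnat x m : Cnot_int x -> (x - Cnat m)%C <> Czero.
Proof.
  intros Hx E. apply (Hx (Z.of_nat m)). rewrite <- Cnat_IZR.
  replace x with (Cadd (Csub x (Cnat m)) (Cnat m)) by ring. rewrite E. ring.
Qed.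

Lemma Cnot_int_add_Cnat x m : Cnot_int x -> (x + Cnat m)%C <> Czero.
Proof.
  intros Hx E. apply (Hx (- Z.of_nat m)%Z). rewrite opp_IZR.
  replace x with (Csub (Cadd x (Cnat m)) (Cnat m)) by ring.
  rewrite E, Cnat_IZR. apply Cplx_ext; simpl; ring.
Qed.

Lemma Cnot_int_sq_sub x n : Cnot_int x -> (x * x - Cnat n * Cnat n)%C <> Czero.
Proof.
  intros Hx. replace (Csub (Cmul x x) (Cmul (Cnat n) (Cnat n)))
    with (Cmul (Csub x (Cnat n)) (Cadd x (Cnat n))) by ring.
  apply Cmul_neq0; [apply Cnot_int_sub_Cnat | apply Cnot_int_add_Cnat]; exact Hx.
Qed.

Lemma Cnot_int_neq0 x : Cnot_int x -> x <> Czero.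
Proof.
  intros Hx. replace x with (Cadd x (Cnat 0)) by (rewrite Cnat_0; ring).
  apply Cnot_int_add_Cnat, Hx.
Qed.

Lemma Cnot_int_one_sub x : Cnot_int x -> Cnot_int (Cone - x)%C.
Proof.
  intros Hx k E. apply (Hx (1 - k)%Z). rewrite minus_IZR.
  replace x with (Csub Cone (Csub Cone x)) by ring. rewrite E. apply Cplx_ext; simpl; ring.
Qed.

Lemma Cnot_int_one_add x : Cnot_int x -> Cnot_int (Cone + x)%C.
Proof.
  intros Hx k E. apply (Hx (k - 1)%Z). rewrite minus_IZR.
  replace x with (Csub (Cadd Cone x) Cone) by ring. rewrite E. apply Cplx_ext; simpl; ring.
Qed.

Lemma Cnot_int_not_in_Z0m x : Cnot_int x -> ~ in_Z0m x.
Proof.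
  intros Hx [n E]. apply (Hx (- Z.of_nat n)%Z).
  rewrite E. apply Cplx_ext; cbn [Re Im Copp RtoC Cnat];
    [rewrite opp_IZR, <- INR_IZR_INZ |]; ring.
Qed.

Lemma Cnot_int_half_sub x : Cnot_int (Chalf + x)%C -> Cnot_int (Chalf - x)%C.
Proof.
  intros Hx. replace (Csub Chalf x) with (Csub Cone (Cadd Chalf x))
    by (rewrite <- Chalf_double; ring).
  apply Cnot_int_one_sub, Hx.
Qed.

(* [Cseries_to f l] unfolds to [Cseq_to (Cpartial f) l]. *)
Definition Cseq_to (u : nat -> Cplx) (l : Cplx) : Prop :=
  Un_cv (fun n => Re (u n)) (Re l) /\ Un_cv (fun n => Im (u n)) (Im l).

Lemma Un_cv_const c : Un_cv (fun _ => c) c.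
Proof. intros e He. exists O. intros. unfold R_dist. rewrite Rminus_diag, Rabs_R0. exact He. Qed.

Lemma Un_cv_subseq (u : nat -> R) (phi : nat -> nat) l :
  (forall n, (n <= phi n)%nat) -> Un_cv u l -> Un_cv (fun n => u (phi n)) l.
Proof.
  intros Hphi Hu e He. destruct (Hu e He) as [N HN].
  exists N. intros n Hn. apply HN. specialize (Hphi n). lia.
Qed.

Lemma Un_cv_even_odd (u : nat -> R) l :
  Un_cv (fun k => u (2 * k)%nat) l -> Un_cv (fun k => u (2 * k + 1)%nat) l -> Un_cv u l.
Proof.
  intros Heven Hodd e He.
  destruct (Heven e He) as [N1 HN1], (Hodd e He) as [N2 HN2].
  exists (2 * (N1 + N2) + 2)%nat. intros n Hn.
  destruct (Nat.Even_or_Odd n) as [[k ->] | [k ->]]; [apply HN1 | apply HN2]; lia.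
Qed.

Lemma Un_cv_inv_INR : Un_cv (fun n => / (INR n + 1)) 0.
Proof.
  intros e He. destruct (archimed_cor1 e He) as [N [HN HN0]].
  exists N. intros n Hn. unfold R_dist. rewrite Rminus_0_r.
  assert (INR N <= INR n) by (apply le_INR; lia).
  assert (0 < INR N) by (apply lt_0_INR; lia).
  rewrite Rabs_pos_eq by (left; apply Rinv_0_lt_compat; lra).
  eapply Rle_lt_trans; [| exact HN]. apply Rinv_le_contravar; lra.
Qed.

Lemma Cseq_to_ext u v l : (forall n, u n = v n) -> Cseq_to u l -> Cseq_to v l.
Proof.
  intros H [Hre Him].
  split; (eapply Un_cv_ext; [| eassumption]); intros; simpl; rewrite H; reflexivity.
Qed.

Lemma Cseq_to_plus u v l m :
  Cseq_to u l -> Cseq_to v m -> Cseq_to (fun n => u n + v n)%C (l + m)%C.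
Proof. intros [A B] [C D]; split; apply CV_plus; auto. Qed.

Lemma Cseq_to_minus u v l m :
  Cseq_to u l -> Cseq_to v m -> Cseq_to (fun n => u n - v n)%C (l - m)%C.
Proof. intros [A B] [C D]; split; apply CV_plus; auto; apply CV_opp; auto. Qed.

Lemma Cseq_to_scal k u l : Cseq_to u l -> Cseq_to (fun n => k * u n)%C (k * l)%C.
Proof.
  intros [A B]; split; simpl.
  - apply CV_minus; apply CV_mult; auto using Un_cv_const.
  - apply CV_plus; apply CV_mult; auto using Un_cv_const.
Qed.

Lemma Cseq_to_S u l : Cseq_to u l -> Cseq_to (fun n => u (S n)) l.
Proof.
  intros [A B].
  split; [apply (Un_cv_subseq (fun n => Re (u n)) S) | apply (Un_cv_subseq (fun n => Im (u n)) S)];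
    auto.
Qed.

Lemma Cseq_to_even_odd u l :
  Cseq_to (fun k => u (2 * k)%nat) l -> Cseq_to (fun k => u (2 * k + 1)%nat) l -> Cseq_to u l.
Proof. intros [A B] [C D]; split; apply Un_cv_even_odd; assumption. Qed.

Lemma Cseq_to_unique u l m : Cseq_to u l -> Cseq_to u m -> l = m.
Proof. intros [A B] [C D]. apply Cplx_ext; eapply UL_sequence; eauto. Qed.

Lemma Re_Cpartial f N : Re (Cpartial f N) = sum_f_R0 (fun n => Re (f n)) N.
Proof. induction N as [|N IH]; simpl; [| rewrite IH]; reflexivity. Qed.

Lemma Im_Cpartial f N : Im (Cpartial f N) = sum_f_R0 (fun n => Im (f n)) N.
Proof. induction N as [|N IH]; simpl; [| rewrite IH]; reflexivity. Qed.

Lemma Cpartial_ext f g N : (forall n, f n = g n) -> Cpartial f N = Cpartial g N.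
Proof. intros H; induction N as [|N IH]; simpl; rewrite ?IH, ?H; reflexivity. Qed.

Lemma Cseq_to_cesaro f l : Cseries_to f l ->
  Cseq_to (fun N => RtoC (/ (INR N + 1)) * Cpartial (Cpartial f) N)%C l.
Proof.
  assert (Hces : forall (u : nat -> R) m, Un_cv u m ->
            Un_cv (fun N => / (INR N + 1) * sum_f_R0 u N) m).
  { intros u m Hu. apply Cesaro_1, (CV_shift' _ 1) in Hu.
    eapply Un_cv_ext; [| exact Hu]. intros n. cbv beta.
    rewrite Nat.add_1_r, S_INR. simpl pred. unfold Rdiv. apply Rmult_comm. }
  intros [Hre Him]. split.
  - eapply Un_cv_ext; [| apply (Hces _ _ Hre)]. intros N. cbv beta.
    cbn [Re Im Cmul RtoC]. rewrite Re_Cpartial. ring.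
  - eapply Un_cv_ext; [| apply (Hces _ _ Him)]. intros N. cbv beta.
    cbn [Re Im Cmul RtoC]. rewrite Im_Cpartial. ring.
Qed.

Lemma Cinv_bound w : Re w <> 0 ->
  Rabs (Re (Cinv w)) <= / Rabs (Re w) /\ Rabs (Im (Cinv w)) <= / Rabs (Re w).
Proof.
  destruct w as [p q]; unfold Cinv; simpl; intros Hp.
  assert (Hd : 0 < p * p + q * q) by nra.
  assert (Hp' : 0 < Rabs p) by (apply Rabs_pos_lt; exact Hp).
  assert (Hpp : Rabs p * Rabs p = p * p) by (rewrite <- Rabs_mult; apply Rabs_pos_eq; nra).
  assert (Hqq : Rabs q * Rabs q = q * q) by (rewrite <- Rabs_mult; apply Rabs_pos_eq; nra).
  pose proof (Rabs_pos q).
  unfold Rdiv.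
  rewrite !Rabs_mult, Rabs_Ropp, (Rabs_pos_eq (/ _)) by (left; apply Rinv_0_lt_compat; exact Hd).
  split; apply (Rmult_le_reg_r (Rabs p * (p * p + q * q))); try nra.
  - replace (/ Rabs p * (Rabs p * (p * p + q * q))) with (p * p + q * q) by (field; lra).
    replace (Rabs p * / (p * p + q * q) * (Rabs p * (p * p + q * q))) with (Rabs p * Rabs p)
      by (field; lra). nra.
  - replace (/ Rabs p * (Rabs p * (p * p + q * q))) with (p * p + q * q) by (field; lra).
    replace (Rabs q * / (p * p + q * q) * (Rabs p * (p * p + q * q))) with (Rabs p * Rabs q)
      by (field; lra). nra.
Qed.

Lemma Cmul_components_le z w m : Rabs (Re w) <= m -> Rabs (Im w) <= m ->
  Rabs (Re (z * w)%C) <= (Rabs (Re z) + Rabs (Im z)) * m /\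
  Rabs (Im (z * w)%C) <= (Rabs (Re z) + Rabs (Im z)) * m.
Proof.
  intros Hre Him. pose proof (Rabs_pos (Re z)). pose proof (Rabs_pos (Im z)).
  assert (Rabs (Re z) * Rabs (Re w) <= Rabs (Re z) * m) by (apply Rmult_le_compat_l; auto).
  assert (Rabs (Re z) * Rabs (Im w) <= Rabs (Re z) * m) by (apply Rmult_le_compat_l; auto).
  assert (Rabs (Im z) * Rabs (Re w) <= Rabs (Im z) * m) by (apply Rmult_le_compat_l; auto).
  assert (Rabs (Im z) * Rabs (Im w) <= Rabs (Im z) * m) by (apply Rmult_le_compat_l; auto).
  simpl. split.
  - unfold Rminus. eapply Rle_trans; [apply Rabs_triang |].
    rewrite Rabs_Ropp, !Rabs_mult. lra.
  - eapply Rle_trans; [apply Rabs_triang |]. rewrite !Rabs_mult. lra.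
Qed.

Lemma sum_telescoping_inv N :
  sum_f_R0 (fun k => / ((INR k + 1) * (INR k + 2))) N = 1 - / (INR (S N) + 1).
Proof.
  induction N as [|N IH]; [simpl; field |].
  rewrite tech5, IH, !S_INR. pose proof (pos_INR N). field. lra.
Qed.

Lemma ex_series_telescoping_inv : ex_series (fun k => / ((INR k + 1) * (INR k + 2))).
Proof.
  exists 1. apply is_series_Reals. intros e He.
  destruct (Un_cv_inv_INR e He) as [N HN]. exists N. intros n Hn.
  rewrite sum_telescoping_inv. specialize (HN (S n) ltac:(lia)). unfold R_dist in *.
  replace (1 - / (INR (S n) + 1) - 1) with (- (/ (INR (S n) + 1) - 0)) by ring.
  rewrite Rabs_Ropp. exact HN.
Qed.

Lemma series_converges_inv_sq_bound (a : nat -> R) K M : (0 < M)%nat ->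
  (forall n, (M <= n)%nat -> Rabs (a n) <= K / (INR n * INR n)) ->
  exists l, Un_cv (sum_f_R0 a) l.
Proof.
  intros HM Hb.
  assert (Hex : ex_series a).
  { apply ex_series_Rabs, (ex_series_incr_n _ M).
    apply (@ex_series_le R_AbsRing R_CompleteNormedModule _
             (fun k => 2 * Rabs K * / ((INR k + 1) * (INR k + 2)))).
    2: { apply (@ex_series_scal_l R_AbsRing R_NormedModule). apply ex_series_telescoping_inv. }
    intros k. change (norm (Rabs (a (M + k)%nat))) with (Rabs (Rabs (a (M + k)%nat))).
    rewrite Rabs_Rabsolu. eapply Rle_trans; [apply Hb; lia |].
    rewrite plus_INR.
    assert (1 <= INR M) by (apply (le_INR 1); lia). pose proof (pos_INR k).
    set (m := INR M + INR k).
    assert (0 < m * m) by (unfold m; nra).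
    apply (Rle_trans _ (Rabs K / (m * m))).
    { apply Rmult_le_compat_r; [left; apply Rinv_0_lt_compat; lra | apply RRle_abs]. }
    assert (Hinv : / (m * m) <= / / 2 * / ((INR k + 1) * (INR k + 2))).
    { rewrite <- Rinv_mult. apply Rinv_le_contravar; unfold m; nra. }
    rewrite Rinv_inv in Hinv. pose proof (Rabs_pos K). unfold Rdiv. nra. }
  destruct Hex as [l Hl]. exists l. apply is_series_Reals in Hl. exact Hl.
Qed.

Lemma Cseries_converges_inv_sq_bound (f : nat -> Cplx) K M : (0 < M)%nat ->
  (forall n, (M <= n)%nat ->
     Rabs (Re (f n)) <= K / (INR n * INR n) /\ Rabs (Im (f n)) <= K / (INR n * INR n)) ->
  exists l, Cseries_to f l.
Proof.
  intros HM Hb.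
  destruct (series_converges_inv_sq_bound (fun n => Re (f n)) K M HM) as [lr Hr];
    [intros; apply Hb; auto |].
  destruct (series_converges_inv_sq_bound (fun n => Im (f n)) K M HM) as [li Hi];
    [intros; apply Hb; auto |].
  exists (mkC lr li).
  split; (eapply Un_cv_ext; [| eassumption]); intros n; simpl;
    [rewrite Re_Cpartial | rewrite Im_Cpartial]; reflexivity.
Qed.

(** * The beta series *)

(* Grouped in pairs, the alternating series has terms of size O(1/k^2). *)
Definition beta_pair (x : Cplx) (k : nat) : Cplx :=
  Cinv ((Cnat (2 * k) + x) * (Cnat (2 * k + 1) + x))%C.

Lemma beta_term_pair x k : ~ in_Z0m x ->
  (beta_term x (2 * k) + beta_term x (2 * k + 1))%C = beta_pair x k.
Proof.
  intros Hx.
  pose proof (Cnat_add_neq0 x (2 * k) Hx). pose proof (Cnat_add_neq0 x (2 * k + 1) Hx).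
  unfold beta_term, beta_pair. rewrite !Cpow_m1, Nat.add_1_r in *.
  rewrite pow_1_even, pow_1_odd, Cnat_S in *.
  change (RtoC 1) with Cone.
  replace (RtoC (-1)) with (Copp Cone) by (apply Cplx_ext; simpl; ring).
  field. split; assumption.
Qed.

Lemma Cpartial_beta_term_odd x K : ~ in_Z0m x ->
  Cpartial (beta_term x) (2 * K + 1) = Cpartial (beta_pair x) K.
Proof.
  intros Hx. induction K as [|K IH].
  - simpl. rewrite <- (beta_term_pair x 0 Hx). reflexivity.
  - replace (2 * S K + 1)%nat with (S (S (2 * K + 1))) by lia.
    change (Cpartial (beta_term x) (S (S (2 * K + 1)))) with
      (Cadd (Cadd (Cpartial (beta_term x) (2 * K + 1)) (beta_term x (S (2 * K + 1))))
            (beta_term x (S (S (2 * K + 1))))).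
    change (Cpartial (beta_pair x) (S K))
      with (Cadd (Cpartial (beta_pair x) K) (beta_pair x (S K))).
    rewrite IH, <- (beta_term_pair x (S K) Hx).
    replace (S (2 * K + 1)) with (2 * S K)%nat by lia.
    replace (S (2 * S K)) with (2 * S K + 1)%nat by lia. ring.
Qed.

Lemma beta_pair_series_converges x : exists l, Cseries_to (beta_pair x) l.
Proof.
  destruct x as [p q].
  destruct (INR_unbounded (2 * Rabs p + Rabs q + 1)) as [M HM].
  pose proof (Rabs_pos p). pose proof (Rabs_pos q).
  assert (HM0 : (0 < M)%nat) by (destruct M; [simpl in HM; lra | lia]).
  apply (Cseries_converges_inv_sq_bound _ 1 M HM0). intros k Hk.
  assert (HkM : INR M <= INR k) by (apply le_INR; lia).
  set (K := INR k) in *.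
  assert (Hw : Re (Cmul (Cadd (Cnat (2 * k)) (mkC p q)) (Cadd (Cnat (2 * k + 1)) (mkC p q)))
               = (2 * K + p) * (2 * K + 1 + p) - q * q).
  { unfold Cnat. rewrite plus_INR, mult_INR. simpl. fold K. ring. }
  assert (Hp : - Rabs p <= p) by (pose proof (Rle_abs (- p)); rewrite Rabs_Ropp in *; lra).
  assert (Hq : q * q = Rabs q * Rabs q) by (rewrite <- Rabs_mult; symmetry; apply Rabs_pos_eq; nra).
  assert (Hbig : K * K <= (2 * K + p) * (2 * K + 1 + p) - q * q).
  { assert (K + Rabs q <= 2 * K + p) by lra. nra. }
  assert (Hne : Re (Cmul (Cadd (Cnat (2 * k)) (mkC p q)) (Cadd (Cnat (2 * k + 1)) (mkC p q))) <> 0)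
    by (rewrite Hw; nra).
  destruct (Cinv_bound _ Hne) as [B1 B2]. rewrite Hw in B1, B2.
  rewrite (Rabs_pos_eq ((2 * K + p) * (2 * K + 1 + p) - q * q)) in B1, B2 by nra.
  assert (/ ((2 * K + p) * (2 * K + 1 + p) - q * q) <= 1 / (K * K)).
  { unfold Rdiv; rewrite Rmult_1_l. apply Rinv_le_contravar; nra. }
  unfold beta_pair. split; lra.
Qed.

Lemma beta_term_tends_to_0 x : Cseq_to (beta_term x) Czero.
Proof.
  destruct x as [p q].
  assert (Hbound : forall n, Rabs p + 1 <= INR n ->
    Rabs (Re (beta_term (mkC p q) n)) <= / (INR n - Rabs p) /\
    Rabs (Im (beta_term (mkC p q) n)) <= / (INR n - Rabs p)).
  { intros n Hn. unfold beta_term, Cdiv. rewrite Cpow_m1.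
    assert (Hp : - Rabs p <= p) by (pose proof (Rle_abs (- p)); rewrite Rabs_Ropp in *; lra).
    assert (Hne : Re (Cadd (Cnat n) (mkC p q)) <> 0) by (simpl; lra).
    destruct (Cinv_bound _ Hne) as [B1 B2].
    change (Re (Cadd (Cnat n) (mkC p q))) with (INR n + p) in B1, B2.
    set (w := Cinv (Cadd (Cnat n) (mkC p q))) in *.
    rewrite (Rabs_pos_eq (INR n + p)) in B1, B2 by lra.
    assert (/ (INR n + p) <= / (INR n - Rabs p)) by (apply Rinv_le_contravar; lra).
    cbn [Re Im Cmul RtoC].
    rewrite !Rmult_0_l, Rminus_0_r, Rplus_0_r, !Rabs_mult, pow_1_abs, !Rmult_1_l. lra. }
  assert (Hcv : forall f : nat -> R,
    (forall n, Rabs p + 1 <= INR n -> Rabs (f n) <= / (INR n - Rabs p)) -> Un_cv f 0).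
  { intros f Hf e He. destruct (INR_unbounded (Rabs p + 1 + / e)) as [N HN].
    exists N. intros n Hn. unfold R_dist. rewrite Rminus_0_r.
    assert (INR N <= INR n) by (apply le_INR; lia).
    assert (0 < / e) by (apply Rinv_0_lt_compat; lra).
    eapply Rle_lt_trans; [apply Hf; lra |].
    rewrite <- (Rinv_inv e). apply Rinv_lt_contravar; [apply Rmult_lt_0_compat |]; lra. }
  split; apply Hcv; intros n Hn; apply Hbound, Hn.
Qed.

Lemma beta_series_converges x : ~ in_Z0m x -> exists l, Cseries_to (beta_term x) l.
Proof.
  intros Hx. destruct (beta_pair_series_converges x) as [l Hl]. exists l.
  assert (Hodd : Cseq_to (fun K => Cpartial (beta_term x) (2 * K + 1)) l)
    by (eapply Cseq_to_ext; [| exact Hl]; intros K; rewrite Cpartial_beta_term_odd; auto).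
  apply Cseq_to_even_odd; [| exact Hodd].
  replace l with (Csub l Czero) by ring.
  apply (Cseq_to_ext
           (fun K => Csub (Cpartial (beta_term x) (2 * K + 1)) (beta_term x (2 * K + 1)))).
  { intros K. rewrite Nat.add_1_r.
    change (Cpartial (beta_term x) (S (2 * K)))
      with (Cadd (Cpartial (beta_term x) (2 * K)) (beta_term x (S (2 * K)))). ring. }
  apply Cseq_to_minus; [exact Hodd |].
  destruct (beta_term_tends_to_0 x) as [A B].
  split; apply (Un_cv_subseq (fun n => _ (beta_term x n)) (fun K => 2 * K + 1)%nat); auto; lia.
Qed.

(** * Fejér summation of cosine series *)

Lemma is_RInt_derive_eq (f df : R -> R) a b v :
  (forall x, Rmin a b <= x <= Rmax a b -> is_derive f x (df x)) ->
  (forall x, Rmin a b <= x <= Rmax a b -> continuous df x) ->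
  f b - f a = v -> is_RInt df a b v.
Proof. intros Hd Hc <-. exact (@is_RInt_derive R_CompleteNormedModule f df a b Hd Hc). Qed.

Lemma is_RInt_eq (f : R -> R) a b v w : is_RInt f a b v -> v = w -> is_RInt f a b w.
Proof. intros H <-; exact H. Qed.

Lemma continuous_of_ex_derive (f : R -> R) t : ex_derive f t -> continuous f t.
Proof. apply (@ex_derive_continuous R_AbsRing R_NormedModule). Qed.

Lemma sin_INR_mult_PI n : sin (INR n * PI) = 0.
Proof.
  induction n as [|n IH]; [simpl; rewrite Rmult_0_l; apply sin_0 |].
  rewrite S_INR, Rmult_plus_distr_r, Rmult_1_l, sin_plus, IH, sin_PI. ring.
Qed.

Lemma cos_INR_mult_PI n : cos (INR n * PI) = (-1) ^ n.
Proof.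
  induction n as [|n IH]; [simpl; rewrite Rmult_0_l; apply cos_0 |].
  rewrite S_INR, Rmult_plus_distr_r, Rmult_1_l, cos_plus, IH, sin_PI, cos_PI. simpl; ring.
Qed.

Lemma is_RInt_cos_INR_mult m : (0 < m)%nat -> is_RInt (fun t => cos (INR m * t)) 0 PI 0.
Proof.
  intros Hm. assert (0 < INR m) by (apply lt_0_INR; exact Hm).
  apply (is_RInt_derive_eq (fun t => sin (INR m * t) / INR m)).
  - intros. auto_derive; [exact I | field; lra].
  - intros. apply continuous_of_ex_derive. auto_derive. exact I.
  - rewrite sin_INR_mult_PI, Rmult_0_r, sin_0. field. lra.
Qed.

Fixpoint dirichlet_kernel (k : nat) (t : R) : R :=
  match k with
  | O => 1
  | S j => dirichlet_kernel j t + 2 * cos (INR (S j) * t)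
  end.

(* [fejer_sum N] is [N + 1] times the Fejér kernel of order [N]. *)
Fixpoint fejer_sum (N : nat) (t : R) : R :=
  match N with
  | O => dirichlet_kernel O t
  | S M => fejer_sum M t + dirichlet_kernel (S M) t
  end.

Lemma dirichlet_kernel_mul_sin k t :
  dirichlet_kernel k t * sin (t / 2) = sin ((INR k + 1 / 2) * t).
Proof.
  induction k as [|k IH]; [simpl; rewrite Rmult_1_l; f_equal; field |].
  cbn [dirichlet_kernel]. rewrite Rmult_plus_distr_r, IH, S_INR.
  replace ((INR k + 1 / 2) * t) with ((INR k + 1) * t - t / 2) by field.
  replace ((INR k + 1 + 1 / 2) * t) with ((INR k + 1) * t + t / 2) by field.
  rewrite sin_minus, sin_plus. ring.
Qed.

Lemma fejer_sum_mul_sin_sq N t :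
  fejer_sum N t * (sin (t / 2) * sin (t / 2)) = (1 - cos ((INR N + 1) * t)) / 2.
Proof.
  pose proof (sin2_cos2 (t / 2)) as Hpyth. unfold Rsqr in Hpyth.
  induction N as [|N IH].
  - cbn [fejer_sum dirichlet_kernel INR].
    replace ((0 + 1) * t) with (t / 2 + t / 2) by field. rewrite cos_plus. lra.
  - cbn [fejer_sum].
    rewrite Rmult_plus_distr_r, IH, <- Rmult_assoc, dirichlet_kernel_mul_sin, S_INR.
    replace ((INR N + 1 + 1 / 2) * t) with ((INR N + 1) * t + t / 2) by field.
    replace ((INR N + 1 + 1) * t) with ((INR N + 1) * t + t / 2 + t / 2) by field.
    rewrite !cos_plus, sin_plus.
    assert (cos ((INR N + 1) * t) * (sin (t / 2) * sin (t / 2) + cos (t / 2) * cos (t / 2))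
            = cos ((INR N + 1) * t)) by (rewrite Hpyth; ring).
    lra.
Qed.

Lemma dirichlet_kernel_0 k : dirichlet_kernel k 0 = 2 * INR k + 1.
Proof.
  induction k as [|k IH]; [simpl; ring |].
  cbn [dirichlet_kernel]. rewrite IH, Rmult_0_r, cos_0, S_INR. ring.
Qed.

Lemma fejer_sum_nonneg N t : 0 <= t <= PI -> 0 <= fejer_sum N t.
Proof.
  intros Ht. destruct (Req_dec t 0) as [-> | Ht0].
  - induction N as [|N IH]; cbn [fejer_sum]; [simpl; lra |].
    rewrite dirichlet_kernel_0. pose proof (pos_INR (S N)). lra.
  - assert (Hs : 0 < sin (t / 2)) by (apply sin_gt_0; lra).
    pose proof (fejer_sum_mul_sin_sq N t). pose proof (COS_bound ((INR N + 1) * t)).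
    assert (0 < sin (t / 2) * sin (t / 2)) by nra. nra.
Qed.

Lemma fejer_sum_mul_sin_sq_le N t : fejer_sum N t * (sin (t / 2) * sin (t / 2)) <= 1.
Proof. rewrite fejer_sum_mul_sin_sq. pose proof (COS_bound ((INR N + 1) * t)). lra. Qed.

Lemma is_RInt_dirichlet_kernel k : is_RInt (dirichlet_kernel k) 0 PI PI.
Proof.
  induction k as [|k IH].
  - apply (is_RInt_ext (fun _ => 1)); [reflexivity |].
    eapply is_RInt_eq; [apply is_RInt_const |]. change ((PI - 0) * 1 = PI). ring.
  - eapply is_RInt_eq.
    + apply (is_RInt_plus _ _ _ _ _ _ IH
               (is_RInt_scal _ _ _ 2 _ (is_RInt_cos_INR_mult (S k) ltac:(lia)))).
    + change (PI + 2 * 0 = PI). ring.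
Qed.

Lemma is_RInt_fejer_sum N : is_RInt (fejer_sum N) 0 PI ((INR N + 1) * PI).
Proof.
  induction N as [|N IH].
  - eapply is_RInt_eq; [apply is_RInt_dirichlet_kernel | simpl; ring].
  - eapply is_RInt_eq; [apply (is_RInt_plus _ _ _ _ _ _ IH (is_RInt_dirichlet_kernel (S N))) |].
    rewrite S_INR. change ((INR N + 1) * PI + PI = (INR N + 1 + 1) * PI). ring.
Qed.

Lemma continuous_fejer_sum N t : continuous (fejer_sum N) t.
Proof.
  apply continuous_of_ex_derive.
  assert (HD : forall k, ex_derive (dirichlet_kernel k) t).
  { induction k as [|k IH]; [apply ex_derive_const |].
    apply (ex_derive_plus (dirichlet_kernel k) (fun t => 2 * cos (INR (S k) * t))); [exact IH |].
    auto_derive. exact I. }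
  induction N as [|N IH]; [apply HD |].
  apply (ex_derive_plus (fejer_sum N) (dirichlet_kernel (S N))); [exact IH | apply HD].
Qed.

Lemma continuous_bounded_on_0_PI (g : R -> R) :
  (forall t, 0 <= t <= PI -> continuous g t) ->
  exists B, 0 <= B /\ forall t, 0 <= t <= PI -> Rabs (g t) <= B.
Proof.
  intros Hg.
  destruct (continuity_ab_maj (fun t => Rabs (g t)) 0 PI) as [M [HM _]].
  - pose proof PI_RGT_0; lra.
  - intros c Hc. apply continuity_pt_filterlim, continuous_Rabs_comp, Hg, Hc.
  - exists (Rabs (g M)). split; [apply Rabs_pos | exact HM].
Qed.

(* Away from [0] the kernel is bounded uniformly in [N]; near [0] [g] is small. *)
Lemma fejer_pointwise_bound (g : R -> R) e :
  (forall t, 0 <= t <= PI -> continuous g t) -> g 0 = 0 -> 0 < e ->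
  exists C, 0 <= C /\
    forall N t, 0 <= t <= PI -> Rabs (g t * fejer_sum N t) <= e * fejer_sum N t + C.
Proof.
  intros Hg Hg0 He. pose proof PI_RGT_0.
  destruct (continuous_bounded_on_0_PI g Hg) as [B [HB HBg]].
  assert (Hc0 : continuity_pt g 0) by (apply continuity_pt_filterlim, Hg; lra).
  destruct (Hc0 e He) as [alp [Halp Hnear]].
  set (d := Rmin (alp / 2) PI).
  assert (Hd : 0 < d <= PI) by (unfold d; split; [apply Rmin_glb_lt; lra | apply Rmin_r]).
  assert (Hdalp : d < alp) by (unfold d; pose proof (Rmin_l (alp / 2) PI); lra).
  assert (Hsd : 0 < sin (d / 2)) by (apply sin_gt_0; lra).
  exists (B / (sin (d / 2) * sin (d / 2))). split; [apply Rdiv_le_0_compat; nra |].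
  intros N t Ht. pose proof (fejer_sum_nonneg N t Ht) as HG.
  rewrite Rabs_mult, (Rabs_pos_eq (fejer_sum N t) HG).
  destruct (Rle_lt_dec t d) as [Htd | Htd].
  - assert (Rabs (g t) <= e).
    { destruct (Req_dec t 0) as [-> | Ht0]; [rewrite Hg0, Rabs_R0; lra |].
      left. specialize (Hnear t). simpl in Hnear. unfold R_dist in Hnear.
      rewrite Hg0, !Rminus_0_r in Hnear. apply Hnear.
      split; [split; [exact I | auto] | rewrite Rabs_pos_eq; lra]. }
    assert (0 <= B / (sin (d / 2) * sin (d / 2))) by (apply Rdiv_le_0_compat; nra).
    nra.
  - assert (Hst : sin (d / 2) <= sin (t / 2)) by (apply sin_incr_1; lra).
    pose proof (fejer_sum_mul_sin_sq_le N t).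
    assert (HGC : fejer_sum N t <= / (sin (d / 2) * sin (d / 2))).
    { apply (Rmult_le_reg_r (sin (d / 2) * sin (d / 2))); [nra |].
      rewrite Rinv_l by nra.
      assert (sin (d / 2) * sin (d / 2) <= sin (t / 2) * sin (t / 2)) by nra. nra. }
    assert (Rabs (g t) * fejer_sum N t <= B * / (sin (d / 2) * sin (d / 2))).
    { apply Rmult_le_compat; auto using Rabs_pos. }
    assert (0 <= e * fejer_sum N t) by nra.
    unfold Rdiv. lra.
Qed.

Lemma fejer_integral_bound (g : R -> R) e :
  (forall t, 0 <= t <= PI -> continuous g t) -> g 0 = 0 -> 0 < e ->
  exists C, 0 <= C /\ forall N,
    Rabs (RInt (fun t => g t * fejer_sum N t) 0 PI) <= e * ((INR N + 1) * PI) + PI * C.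
Proof.
  intros Hg Hg0 He. pose proof PI_RGT_0.
  destruct (fejer_pointwise_bound g e Hg Hg0 He) as [C [HC Hpt]].
  exists C. split; [exact HC |]. intros N.
  assert (Hcont : forall z, 0 <= z <= PI -> continuous (fun t => g t * fejer_sum N t) z)
    by (intros; apply (continuous_mult g (fejer_sum N));
        [apply Hg; auto | apply continuous_fejer_sum]).
  assert (HI : is_RInt (fun t => e * fejer_sum N t + C) 0 PI (e * ((INR N + 1) * PI) + PI * C)).
  { eapply is_RInt_eq.
    - apply (is_RInt_plus _ _ _ _ _ _ (is_RInt_scal _ _ _ e _ (is_RInt_fejer_sum N))
                                      (is_RInt_const 0 PI C)).
    - change (e * ((INR N + 1) * PI) + (PI - 0) * C = e * ((INR N + 1) * PI) + PI * C). ring. }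
  eapply Rle_trans.
  - apply abs_RInt_le; [lra |].
    apply (@ex_RInt_continuous R_CompleteNormedModule). intros z Hz.
    rewrite Rmin_left, Rmax_right in Hz by lra. apply Hcont, Hz.
  - rewrite <- (is_RInt_unique _ _ _ _ HI). apply RInt_le; [lra | | eexists; exact HI |].
    + apply (@ex_RInt_continuous R_CompleteNormedModule). intros z Hz.
      rewrite Rmin_left, Rmax_right in Hz by lra. apply continuous_Rabs_comp, Hcont, Hz.
    + intros t Ht. apply Hpt. lra.
Qed.

Lemma fejer_means_tend_to_0 (g : R -> R) :
  (forall t, 0 <= t <= PI -> continuous g t) -> g 0 = 0 ->
  Un_cv (fun N => RInt (fun t => g t * fejer_sum N t) 0 PI / (INR N + 1)) 0.
Proof.
  intros Hg Hg0 eps Heps. pose proof PI_RGT_0.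
  set (e := eps / (2 * PI)).
  assert (He : 0 < e) by (apply Rdiv_lt_0_compat; lra).
  destruct (fejer_integral_bound g e Hg Hg0 He) as [C [HC Hint]].
  assert (Hq : 0 < eps / (2 * (PI * C + 1))) by (apply Rdiv_lt_0_compat; nra).
  destruct (archimed_cor1 _ Hq) as [N0 [HN0 HN0pos]].
  exists N0. intros n Hn. unfold R_dist. rewrite Rminus_0_r.
  assert (INR N0 <= INR n) by (apply le_INR; lia).
  assert (0 < INR N0) by (apply lt_0_INR; lia).
  assert (HPC : PI * C + 1 < eps / 2 * INR N0).
  { apply (Rmult_lt_compat_r (INR N0 * (PI * C + 1))) in HN0; [| apply Rmult_lt_0_compat; nra].
    replace (/ INR N0 * (INR N0 * (PI * C + 1))) with (PI * C + 1) in HN0 by (field; lra).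
    replace (eps / (2 * (PI * C + 1)) * (INR N0 * (PI * C + 1))) with (eps / 2 * INR N0) in HN0
      by (field; nra). exact HN0. }
  unfold Rdiv at 1. rewrite Rabs_mult, Rabs_inv, (Rabs_pos_eq (INR n + 1)) by lra.
  apply (Rmult_lt_reg_r (INR n + 1)); [lra |].
  rewrite Rmult_assoc, Rinv_l, Rmult_1_r by lra.
  eapply Rle_lt_trans; [apply Hint |].
  replace (e * ((INR n + 1) * PI)) with (eps / 2 * (INR n + 1)) by (unfold e; field; lra).
  nra.
Qed.

(** * The partial fraction expansion of [π / sin (π x)] *)

Definition is_CRInt (f : R -> Cplx) (a b : R) (z : Cplx) : Prop :=
  is_RInt (fun t => Re (f t)) a b (Re z) /\ is_RInt (fun t => Im (f t)) a b (Im z).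

Lemma is_CRInt_ext f g a b z :
  (forall t, f t = g t) -> is_CRInt f a b z -> is_CRInt g a b z.
Proof.
  intros H [Hre Him]. split.
  - apply (is_RInt_ext (fun t => Re (f t))); [intros t _; rewrite H |]; auto.
  - apply (is_RInt_ext (fun t => Im (f t))); [intros t _; rewrite H |]; auto.
Qed.

Lemma is_CRInt_plus f g a b z w :
  is_CRInt f a b z -> is_CRInt g a b w -> is_CRInt (fun t => f t + g t)%C a b (z + w)%C.
Proof.
  intros [A B] [C D].
  split; [exact (is_RInt_plus _ _ _ _ _ _ A C) | exact (is_RInt_plus _ _ _ _ _ _ B D)].
Qed.

Lemma is_CRInt_scal r f a b z :
  is_CRInt f a b z -> is_CRInt (fun t => RtoC r * f t)%C a b (RtoC r * z)%C.
Proof.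
  intros [A B]. apply (is_RInt_scal _ _ _ r) in A. apply (is_RInt_scal _ _ _ r) in B.
  split.
  - apply (is_RInt_ext (fun t => r * Re (f t))); [intros; simpl; ring |].
    replace (Re (Cmul (RtoC r) z)) with (r * Re z) by (simpl; ring). exact A.
  - apply (is_RInt_ext (fun t => r * Im (f t))); [intros; simpl; ring |].
    replace (Im (Cmul (RtoC r) z)) with (r * Im z) by (simpl; ring). exact B.
Qed.

(* [cos (t x)] and [sin (t x)] for real [t]. *)
Definition Ccos_scal (x : Cplx) (t : R) : Cplx :=
  mkC (cos (Re x * t) * cosh (Im x * t)) (- (sin (Re x * t) * sinh (Im x * t))).
Definition Csin_scal (x : Cplx) (t : R) : Cplx :=
  mkC (sin (Re x * t) * cosh (Im x * t)) (cos (Re x * t) * sinh (Im x * t)).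

Definition Csin_pi (x : Cplx) : Cplx := Csin_scal x PI.

Lemma Ccos_scal_0 x : Ccos_scal x 0 = Cone.
Proof.
  apply Cplx_ext; unfold Ccos_scal, cosh, sinh; simpl;
    rewrite !Rmult_0_r, ?cos_0, ?sin_0, Ropp_0, exp_0; field.
Qed.

Lemma Csin_scal_0 x : Csin_scal x 0 = Czero.
Proof.
  apply Cplx_ext; unfold Csin_scal, cosh, sinh; simpl;
    rewrite !Rmult_0_r, ?cos_0, ?sin_0, Ropp_0, exp_0; field.
Qed.

Lemma continuous_Ccos_scal x t :
  continuous (fun t => Re (Ccos_scal x t)) t /\ continuous (fun t => Im (Ccos_scal x t)) t.
Proof.
  unfold Ccos_scal, cosh, sinh; simpl.
  split; apply continuous_of_ex_derive; auto_derive; exact I.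
Qed.

Definition fourier_coef (x : Cplx) (n : nat) : Cplx :=
  ((- Cone) ^ n * x * Csin_pi x * Cinv (x * x - Cnat n * Cnat n))%C.

(* The antiderivative is [(x sin (t x) cos (n t) - n cos (t x) sin (n t)) / (x^2 - n^2)]. *)
Lemma is_CRInt_cos_fourier x n : (x * x - Cnat n * Cnat n)%C <> Czero ->
  is_CRInt (fun t => RtoC (cos (INR n * t)) * Ccos_scal x t)%C 0 PI (fourier_coef x n).
Proof.
  intros Hx.
  set (w := Cinv (Csub (Cmul x x) (Cmul (Cnat n) (Cnat n)))).
  assert (Hw : Cmul w (Csub (Cmul x x) (Cmul (Cnat n) (Cnat n))) = Cone)
    by (unfold w; field; exact Hx).
  set (F t := Cmul w (Csub (Cmul x (Cmul (Csin_scal x t) (RtoC (cos (INR n * t)))))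
                           (Cmul (Cnat n) (Cmul (Ccos_scal x t) (RtoC (sin (INR n * t))))))).
  assert (HF : fourier_coef x n = Csub (F PI) (F 0)).
  { unfold F, fourier_coef. fold w. rewrite Csin_scal_0, Ccos_scal_0, Rmult_0_r, sin_0, cos_0.
    unfold Csin_pi. rewrite sin_INR_mult_PI, cos_INR_mult_PI, Cpow_m1.
    apply Cplx_ext; simpl; ring. }
  assert (Htarget : forall t, Cmul (RtoC (cos (INR n * t))) (Ccos_scal x t)
     = Cmul (Cmul (RtoC (cos (INR n * t))) (Ccos_scal x t))
            (Cmul w (Csub (Cmul x x) (Cmul (Cnat n) (Cnat n)))))
    by (intros; rewrite Hw; ring).
  rewrite HF. clearbody w. destruct x as [p q].
  split; [apply is_RInt_derive_eq with (f := fun t => Re (F t))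
         | apply is_RInt_derive_eq with (f := fun t => Im (F t))].
  2, 5: intros t _; apply continuous_of_ex_derive;
    unfold Ccos_scal, cosh, sinh; simpl; auto_derive; exact I.
  2, 4: simpl; ring.
  all: intros t _; rewrite (Htarget t); unfold F, Csin_scal, Ccos_scal, cosh, sinh, Cnat; simpl.
  all: auto_derive; [exact I | unfold Rdiv; ring].
Qed.

(* The expansion [π / sin (π x) = 1/x + Σ_{n≥1} (-1)^n 2x / (x^2 - n^2)]. *)
Definition csc_term (x : Cplx) (n : nat) : Cplx :=
  match n with
  | O => Cinv x
  | S _ => ((- Cone) ^ n * (RtoC 2 * x) * Cinv (x * x - Cnat n * Cnat n))%C
  end.

Lemma csc_term_mul_Csin_pi x n : Cnot_int x ->
  (csc_term x n * Csin_pi x)%C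
  = match n with O => fourier_coef x O | S _ => (RtoC 2 * fourier_coef x n)%C end.
Proof.
  intros Hx. pose proof (Cnot_int_neq0 x Hx). pose proof (Cnot_int_sq_sub x n Hx).
  destruct n; unfold csc_term, fourier_coef.
  - change (Cpow (Copp Cone) 0) with Cone. rewrite Cnat_0 in *.
    field. exact H.
  - field. auto.
Qed.

Lemma is_CRInt_dirichlet x N : Cnot_int x ->
  is_CRInt (fun t => RtoC (dirichlet_kernel N t) * Ccos_scal x t)%C 0 PI
           (Cpartial (csc_term x) N * Csin_pi x)%C.
Proof.
  intros Hx. induction N as [|N IH].
  - cbn [Cpartial]. rewrite (csc_term_mul_Csin_pi x 0 Hx).
    apply (is_CRInt_ext (fun t => Cmul (RtoC (cos (INR 0 * t))) (Ccos_scal x t)));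
      [intros t; simpl; rewrite Rmult_0_l, cos_0; reflexivity |].
    apply is_CRInt_cos_fourier, Cnot_int_sq_sub, Hx.
  - replace (Cmul (Cpartial (csc_term x) (S N)) (Csin_pi x))
      with (Cadd (Cmul (Cpartial (csc_term x) N) (Csin_pi x))
                 (Cmul (RtoC 2) (fourier_coef x (S N))))
      by (pose proof (csc_term_mul_Csin_pi x (S N) Hx) as E; cbv iota in E; rewrite <- E;
          change (Cpartial (csc_term x) (S N))
            with (Cadd (Cpartial (csc_term x) N) (csc_term x (S N)));
          ring).
    apply (is_CRInt_ext (fun t => Cadd (Cmul (RtoC (dirichlet_kernel N t)) (Ccos_scal x t))
             (Cmul (RtoC 2) (Cmul (RtoC (cos (INR (S N) * t))) (Ccos_scal x t)))));
      [intros t; apply Cplx_ext; simpl; ring |].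
    apply is_CRInt_plus; [exact IH |].
    apply is_CRInt_scal, is_CRInt_cos_fourier, Cnot_int_sq_sub, Hx.
Qed.

Lemma is_CRInt_fejer x N : Cnot_int x ->
  is_CRInt (fun t => RtoC (fejer_sum N t) * Ccos_scal x t)%C 0 PI
           (Cpartial (Cpartial (csc_term x)) N * Csin_pi x)%C.
Proof.
  intros Hx. induction N as [|N IH]; [apply is_CRInt_dirichlet, Hx |].
  replace (Cmul (Cpartial (Cpartial (csc_term x)) (S N)) (Csin_pi x))
    with (Cadd (Cmul (Cpartial (Cpartial (csc_term x)) N) (Csin_pi x))
               (Cmul (Cpartial (csc_term x) (S N)) (Csin_pi x)))
    by (change (Cpartial (Cpartial (csc_term x)) (S N))
          with (Cadd (Cpartial (Cpartial (csc_term x)) N) (Cpartial (csc_term x) (S N))); ring).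
  apply (is_CRInt_ext (fun t => Cadd (Cmul (RtoC (fejer_sum N t)) (Ccos_scal x t))
           (Cmul (RtoC (dirichlet_kernel (S N) t)) (Ccos_scal x t))));
    [intros t; apply Cplx_ext; simpl; ring |].
  apply is_CRInt_plus; [exact IH | apply is_CRInt_dirichlet, Hx].
Qed.

Lemma csc_series_converges x : exists l, Cseries_to (csc_term x) l.
Proof.
  destruct x as [p q]. pose proof (Rabs_pos p). pose proof (Rabs_pos q).
  destruct (INR_unbounded (2 * Rabs p + 1)) as [M HM].
  assert (HM0 : (0 < M)%nat) by (destruct M; [simpl in HM; lra | lia]).
  apply (Cseries_converges_inv_sq_bound _ (4 * (Rabs p + Rabs q)) M HM0).
  intros [|n] Hn; [lia |].
  assert (HN : INR M <= INR (S n)) by (apply le_INR; lia).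
  set (N := INR (S n)) in *.
  set (d := Csub (Cmul (mkC p q) (mkC p q)) (Cmul (Cnat (S n)) (Cnat (S n)))).
  assert (Hd : Re d = p * p - q * q - N * N) by (unfold d, N; simpl; ring).
  assert (Hpp : p * p = Rabs p * Rabs p)
    by (rewrite <- Rabs_mult; symmetry; apply Rabs_pos_eq; nra).
  assert (Hdbig : N * N / 2 <= Rabs (Re d)) by (rewrite Hd, Rabs_left1; nra).
  assert (Hd0 : Re d <> 0) by (intros E; rewrite E, Rabs_R0 in Hdbig; nra).
  assert (Hinv : / Rabs (Re d) <= 2 / (N * N)).
  { replace (2 / (N * N)) with (/ (N * N / 2)) by (field; lra). apply Rinv_le_contravar; nra. }
  destruct (Cinv_bound d Hd0) as [Bre Bim].
  unfold csc_term. fold d. rewrite Cpow_m1.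
  set (z := Cmul (RtoC ((-1) ^ S n)) (Cmul (RtoC 2) (mkC p q))).
  assert (Hz : Rabs (Re z) + Rabs (Im z) = 2 * (Rabs p + Rabs q)).
  { replace (Re z) with ((-1) ^ S n * (2 * p)) by (unfold z; simpl; ring).
    replace (Im z) with ((-1) ^ S n * (2 * q)) by (unfold z; simpl; ring).
    rewrite !Rabs_mult, pow_1_abs, (Rabs_pos_eq 2) by lra. ring. }
  destruct (Cmul_components_le z (Cinv d) (2 / (N * N))) as [Hre Him]; [lra | lra |].
  rewrite Hz in Hre, Him.
  replace (4 * (Rabs p + Rabs q) / (N * N)) with (2 * (Rabs p + Rabs q) * (2 / (N * N)))
    by (field; lra).
  split; assumption.
Qed.

Lemma Csin_pi_neq0 x : Cnot_int x -> Csin_pi x <> Czero.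
Proof.
  intros Hx E. destruct x as [p q]. pose proof PI_RGT_0.
  pose proof (f_equal Re E) as Ere. pose proof (f_equal Im E) as Eim.
  unfold Csin_pi, Csin_scal in Ere, Eim. simpl in Ere, Eim.
  assert (Hcosh : 0 < cosh (q * PI))
    by (unfold cosh; pose proof (exp_pos (q * PI)); pose proof (exp_pos (- (q * PI))); lra).
  assert (Hsin : sin (p * PI) = 0) by (apply Rmult_integral in Ere; destruct Ere; [auto | lra]).
  assert (Hcos : cos (p * PI) <> 0).
  { intros Hc. pose proof (sin2_cos2 (p * PI)). unfold Rsqr in *. rewrite Hsin, Hc in *. lra. }
  assert (Hsinh : sinh (q * PI) = 0)
    by (apply Rmult_integral in Eim; destruct Eim; [contradiction | auto]).
  unfold sinh in Hsinh. assert (Hexp : exp (q * PI) = exp (- (q * PI))) by lra.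
  apply (f_equal ln) in Hexp. rewrite !ln_exp in Hexp.
  assert (q = 0) by nra. subst q.
  destruct (sin_eq_0_0 _ Hsin) as [k Hk].
  apply (Hx k), Cplx_ext; simpl; [apply (Rmult_eq_reg_r PI); lra | reflexivity].
Qed.

(* Fejér's theorem at [t = 0] for the cosine series of [cos (x t)] on [[0, π]]. *)
Lemma fejer_means_csc x : Cnot_int x ->
  Cseq_to (fun N => RtoC (/ (INR N + 1)) * (Cpartial (Cpartial (csc_term x)) N * Csin_pi x))%C
          (RtoC PI).
Proof.
  intros Hx. pose proof (Ccos_scal_0 x) as H0.
  assert (Hre0 : Re (Ccos_scal x 0) = 1) by (rewrite H0; reflexivity).
  assert (Him0 : Im (Ccos_scal x 0) = 0) by (rewrite H0; reflexivity).
  assert (Hpos : forall N, INR N + 1 <> 0) by (intros N; pose proof (pos_INR N); lra).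
  split.
  - assert (Hf : Un_cv (fun N => RInt (fun t => (Re (Ccos_scal x t) - 1) * fejer_sum N t) 0 PI
                                 / (INR N + 1)) 0).
    { apply fejer_means_tend_to_0; [| rewrite Hre0; ring].
      intros t _. apply (continuous_minus (fun t => Re (Ccos_scal x t)) (fun _ => 1));
        [apply continuous_Ccos_scal | apply continuous_const]. }
    replace (Re (RtoC PI)) with (0 + PI) by (simpl; ring).
    eapply Un_cv_ext; [| apply (CV_plus _ _ _ _ Hf (Un_cv_const PI))]. intros N. cbv beta.
    destruct (is_CRInt_fejer x N Hx) as [HI _].
    pose proof (is_RInt_minus _ _ _ _ _ _ HI (is_RInt_fejer_sum N)) as HI'.
    apply (is_RInt_ext _ (fun t => (Re (Ccos_scal x t) - 1) * fejer_sum N t)) in HI';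
      [| intros t _; simpl; change (minus ?a ?b) with (a - b); ring].
    rewrite (is_RInt_unique _ _ _ _ HI'). change (minus ?a ?b) with (a - b).
    cbn [Re Im Cmul RtoC]. field. apply Hpos.
  - assert (Hf : Un_cv (fun N => RInt (fun t => Im (Ccos_scal x t) * fejer_sum N t) 0 PI
                                 / (INR N + 1)) 0)
      by (apply fejer_means_tend_to_0; [intros t _; apply continuous_Ccos_scal | exact Him0]).
    eapply Un_cv_ext; [| exact Hf]. intros N. cbv beta.
    destruct (is_CRInt_fejer x N Hx) as [_ HI].
    apply (is_RInt_ext _ (fun t => Im (Ccos_scal x t) * fejer_sum N t)) in HI;
      [| intros t _; simpl; ring].
    rewrite (is_RInt_unique _ _ _ _ HI). cbn [Re Im Cmul RtoC]. field. apply Hpos.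
Qed.

Lemma csc_series x : Cnot_int x -> Cseries_to (csc_term x) (RtoC PI / Csin_pi x)%C.
Proof.
  intros Hx. destruct (csc_series_converges x) as [l Hl].
  assert (Hlim : Cseq_to (fun N => Cmul (RtoC (/ (INR N + 1)))
                     (Cmul (Cpartial (Cpartial (csc_term x)) N) (Csin_pi x))) (Cmul l (Csin_pi x))).
  { apply (Cseq_to_ext (fun N => Cmul (Csin_pi x)
             (Cmul (RtoC (/ (INR N + 1))) (Cpartial (Cpartial (csc_term x)) N)))); [intros; ring |].
    replace (Cmul l (Csin_pi x)) with (Cmul (Csin_pi x) l) by ring.
    apply Cseq_to_scal, Cseq_to_cesaro, Hl. }
  pose proof (Cseq_to_unique _ _ _ Hlim (fejer_means_csc x Hx)) as E.
  replace (Cdiv (RtoC PI) (Csin_pi x)) with l; [exact Hl |].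
  rewrite <- E. field. apply Csin_pi_neq0, Hx.
Qed.

(** * Reflection of the beta series *)

Lemma csc_term_S_sub_beta_term x n : Cnot_int x ->
  (csc_term x (S n) - beta_term x (S n))%C = beta_term (Cone - x)%C n.
Proof.
  intros Hx.
  pose proof (Cnot_int_sub_Cnat x (S n) Hx). pose proof (Cnot_int_add_Cnat x (S n) Hx).
  pose proof (Cnot_int_sq_sub x (S n) Hx).
  unfold csc_term, beta_term. rewrite !Cpow_m1, Cnat_S in *. rewrite RtoC_2.
  replace (RtoC ((-1) ^ S n)) with (Copp (RtoC ((-1) ^ n))) by (apply Cplx_ext; simpl; ring).
  field. repeat split; Cneq0.
Qed.

Lemma Cpartial_beta_term_reflection x N : Cnot_int x ->
  Cpartial (beta_term (Cone - x)%C) N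
  = (Cpartial (csc_term x) (S N) - Cpartial (beta_term x) (S N))%C.
Proof.
  intros Hx. induction N as [|N IH].
  - pose proof (Cnot_int_neq0 x Hx).
    change (Cpartial (beta_term (Csub Cone x)) 0) with (beta_term (Csub Cone x) 0).
    rewrite <- (csc_term_S_sub_beta_term x 0 Hx).
    change (Cpartial ?f 1) with (Cadd (f O) (f 1%nat)).
    replace (csc_term x 0) with (beta_term x 0); [ring |].
    unfold csc_term, beta_term. rewrite Cnat_0. change (Cpow (Copp Cone) 0) with Cone.
    field. exact H.
  - change (Cpartial ?f (S ?m)) with (Cadd (Cpartial f m) (f (S m))).
    rewrite IH, <- (csc_term_S_sub_beta_term x (S N) Hx). ring.
Qed.

Lemma beta_series_reflection x l : Cnot_int x -> Cseries_to (beta_term x) l ->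
  Cseries_to (beta_term (Cone - x)%C) (RtoC PI / Csin_pi x - l)%C.
Proof.
  intros Hx Hl.
  apply (Cseq_to_ext (fun N => Csub (Cpartial (csc_term x) (S N)) (Cpartial (beta_term x) (S N))));
    [intros N; symmetry; apply Cpartial_beta_term_reflection, Hx |].
  apply Cseq_to_minus; apply (Cseq_to_S (Cpartial _)); [apply csc_series, Hx | exact Hl].
Qed.

(** * The terms of the hypergeometric series *)

Lemma poch_one n : poch Cone n = Cnat (Factorial.fact n).
Proof.
  induction n as [|n IH]; [reflexivity |].
  simpl poch. rewrite IH. unfold Cnat.
  change (Factorial.fact (S n)) with (S n * Factorial.fact n)%nat. rewrite mult_INR, S_INR.
  apply Cplx_ext; simpl; ring.
Qed.

Lemma poch_add_one l n : (poch (l + Cone) n * l)%C = (poch l n * (l + Cnat n))%C.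
Proof.
  induction n as [|n IH]; [apply Cplx_ext; simpl; ring |].
  simpl poch. rewrite Cnat_S.
  transitivity (Cmul (Cmul (poch (Cadd l Cone) n) l) (Cadd (Cadd l Cone) (Cnat n))); [ring |].
  rewrite IH. ring.
Qed.

Lemma poch_neq0 l n : ~ in_Z0m l -> poch l n <> Czero.
Proof.
  intros Hl. induction n as [|n IH]; simpl; [Cneq0 |].
  apply Cmul_neq0; [exact IH |].
  replace (Cadd l (Cnat n)) with (Cadd (Cnat n) l) by ring. apply Cnat_add_neq0, Hl.
Qed.

Lemma poch_add_one_eq l n : l <> Czero ->
  poch (l + Cone)%C n = (poch l n * (l + Cnat n) / l)%C.
Proof. intros Hl. rewrite <- poch_add_one. field. exact Hl. Qed.

Lemma poch_eq_one_add t n : (t + Cnat n)%C <> Czero ->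
  poch t n = (t * poch (Cone + t) n / (t + Cnat n))%C.
Proof.
  intros Ht. replace (Cadd Cone t) with (Cadd t Cone) by ring.
  replace (Cmul t (poch (Cadd t Cone) n)) with (Cmul (poch (Cadd t Cone) n) t) by ring.
  rewrite poch_add_one. field. exact Ht.
Qed.

Definition kappa (u v mu : Cplx) : Cplx :=
  ((Chalf - u) * (Chalf - v) * (Chalf + u) * (Chalf + v)
   / (RtoC 2 * (u + v) * ((Chalf - mu) * (Chalf + mu))))%C.

(* [(x^2 - uv) / ((x^2 - u^2) (x^2 - v^2))] at [x = n + 1/2], split into simple fractions. *)
Lemma hyp_term_partial_fractions u v mu n :
  (mu * mu = u * v)%C -> (u + v)%C <> Czero ->
  ~ in_Z0m (Chalf - mu)%C -> ~ in_Z0m (Chalf + mu)%C ->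
  Cnot_int (Chalf + u)%C -> Cnot_int (Chalf + v)%C ->
  hyp_term [Cone; RtoC 3 / RtoC 2 - mu; RtoC 3 / RtoC 2 + mu;
            Chalf - u; Chalf - v; Chalf + u; Chalf + v]%C
           [Chalf - mu; Chalf + mu; Cone + (Chalf - u); Cone + (Chalf - v);
            Cone + (Chalf + u); Cone + (Chalf + v)]%C (- Cone)%C n
  = (kappa u v mu * (beta_term (Chalf - u) n - beta_term (Chalf + u) n
                     + beta_term (Chalf - v) n - beta_term (Chalf + v) n))%C.
Proof.
  intros Hmu Huv Hm Hp Hu Hv.
  pose proof (Cnot_int_half_sub u Hu) as Hu'. pose proof (Cnot_int_half_sub v Hv) as Hv'.
  pose proof (not_in_Z0m_neq0 _ Hm). pose proof (not_in_Z0m_neq0 _ Hp).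
  pose proof (poch_neq0 _ n Hm). pose proof (poch_neq0 _ n Hp).
  pose proof (Cnat_fact_neq0 n).
  pose proof (Cnot_int_add_Cnat _ n Hu). pose proof (Cnot_int_add_Cnat _ n Hv).
  pose proof (Cnot_int_add_Cnat _ n Hu'). pose proof (Cnot_int_add_Cnat _ n Hv').
  pose proof (poch_neq0 _ n (Cnot_int_not_in_Z0m _ (Cnot_int_one_add _ Hu))).
  pose proof (poch_neq0 _ n (Cnot_int_not_in_Z0m _ (Cnot_int_one_add _ Hv))).
  pose proof (poch_neq0 _ n (Cnot_int_not_in_Z0m _ (Cnot_int_one_add _ Hu'))).
  pose proof (poch_neq0 _ n (Cnot_int_not_in_Z0m _ (Cnot_int_one_add _ Hv'))).
  assert (Hterm : hyp_term [Cone; RtoC 3 / RtoC 2 - mu; RtoC 3 / RtoC 2 + mu;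
            Chalf - u; Chalf - v; Chalf + u; Chalf + v]%C
           [Chalf - mu; Chalf + mu; Cone + (Chalf - u); Cone + (Chalf - v);
            Cone + (Chalf + u); Cone + (Chalf + v)]%C (- Cone)%C n
    = ((- Cone) ^ n * ((Chalf - mu + Cnat n) * (Chalf + mu + Cnat n))
         / ((Chalf - mu) * (Chalf + mu))
       * ((Chalf - u) / (Chalf - u + Cnat n)) * ((Chalf - v) / (Chalf - v + Cnat n))
       * ((Chalf + u) / (Chalf + u + Cnat n)) * ((Chalf + v) / (Chalf + v + Cnat n)))%C).
  { unfold hyp_term. cbn [map Cprod fold_right]. rewrite poch_one, three_halves.
    replace (Csub (Cadd Chalf Cone) mu) with (Cadd (Csub Chalf mu) Cone) by ring.
    replace (Cadd (Cadd Chalf Cone) mu) with (Cadd (Cadd Chalf mu) Cone) by ring.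
    rewrite !poch_add_one_eq by assumption.
    rewrite (poch_eq_one_add (Csub Chalf u)), (poch_eq_one_add (Csub Chalf v)),
            (poch_eq_one_add (Cadd Chalf u)), (poch_eq_one_add (Cadd Chalf v)) by assumption.
    field. repeat split; assumption. }
  assert (Hnum : ((Chalf - mu + Cnat n) * (Chalf + mu + Cnat n)
                  = (Chalf + Cnat n) * (Chalf + Cnat n) - u * v)%C).
  { rewrite <- Hmu. ring. }
  rewrite Hterm, Hnum. unfold kappa, beta_term. rewrite RtoC_2.
  field. repeat split; Cneq0.
Qed.

Lemma Cexp_add z w : Cexp (z + w)%C = (Cexp z * Cexp w)%C.
Proof.
  destruct z as [p q], w as [r s].
  apply Cplx_ext; unfold Cexp; simpl; rewrite exp_plus, ?cos_plus, ?sin_plus; ring.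
Qed.

Lemma Ccos_mul_Ccos z w : (RtoC 2 * (Ccos z * Ccos w) = Ccos (z + w) + Ccos (z - w))%C.
Proof.
  unfold Ccos.
  replace (Cmul Ci (Cadd z w)) with (Cadd (Cmul Ci z) (Cmul Ci w)) by ring.
  replace (Copp (Cadd (Cmul Ci z) (Cmul Ci w))) with (Cadd (Copp (Cmul Ci z)) (Copp (Cmul Ci w)))
    by ring.
  replace (Cmul Ci (Csub z w)) with (Cadd (Cmul Ci z) (Copp (Cmul Ci w))) by ring.
  replace (Copp (Cadd (Cmul Ci z) (Copp (Cmul Ci w)))) with (Cadd (Copp (Cmul Ci z)) (Cmul Ci w))
    by ring.
  rewrite !Cexp_add, RtoC_2. field. Cneq0.
Qed.

Lemma Csin_pi_half_add w : Csin_pi (Chalf + w)%C = Ccos (RtoC PI * w)%C.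
Proof.
  destruct w as [p q].
  unfold Csin_pi, Csin_scal, Ccos, Cexp, Chalf, cosh, sinh.
  cbn [Re Im Cadd Cmul Cdiv Cinv Copp Ci RtoC Cone].
  replace ((1 * (2 / (2 * 2 + 0 * 0)) - 0 * (- 0 / (2 * 2 + 0 * 0)) + p) * PI)
    with (PI / 2 + PI * p) by field.
  replace ((1 * (- 0 / (2 * 2 + 0 * 0)) + 0 * (2 / (2 * 2 + 0 * 0)) + q) * PI) with (PI * q)
    by field.
  rewrite sin_plus, cos_plus, sin_PI2, cos_PI2.
  replace (0 * (PI * p - 0 * q) - 1 * (PI * q + 0 * p)) with (- (PI * q)) by ring.
  replace (0 * (PI * q + 0 * p) + 1 * (PI * p - 0 * q)) with (PI * p) by ring.
  rewrite cos_neg, sin_neg, Ropp_involutive.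
  apply Cplx_ext; simpl; field.
Qed.

Open Scope C_scope.

Lemma Ccos_pi_neq0 w : Cnot_int (Chalf + w) -> Ccos (RtoC PI * w) <> Czero.
Proof. intros Hw. rewrite <- Csin_pi_half_add. apply Csin_pi_neq0, Hw. Qed.

Lemma hyp_7F6_series u v mu lu lv :
  (mu * mu = u * v)%C -> (u + v)%C <> Czero ->
  ~ in_Z0m (Chalf - mu)%C -> ~ in_Z0m (Chalf + mu)%C ->
  Cnot_int (Chalf + u)%C -> Cnot_int (Chalf + v)%C ->
  Cseries_to (beta_term (Chalf + u)) lu -> Cseries_to (beta_term (Chalf + v)) lv ->
  Cseries_to
    (hyp_term [Cone; RtoC 3 / RtoC 2 - mu; RtoC 3 / RtoC 2 + mu;
               Chalf - u; Chalf - v; Chalf + u; Chalf + v]%C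
              [Chalf - mu; Chalf + mu; Cone + (Chalf - u); Cone + (Chalf - v);
               Cone + (Chalf + u); Cone + (Chalf + v)]%C (- Cone)%C)
    (kappa u v mu * (RtoC PI / Ccos (RtoC PI * u) + RtoC PI / Ccos (RtoC PI * v)
                     - RtoC 2 * (lu + lv)))%C.
Proof.
  intros Hmu Huv Hm Hp Hu Hv Hlu Hlv.
  assert (Hrefl : forall w l, Cnot_int (Chalf + w)%C -> Cseries_to (beta_term (Chalf + w)) l ->
            Cseries_to (beta_term (Chalf - w)) (RtoC PI / Ccos (RtoC PI * w) - l)%C).
  { intros w l Hw Hl. rewrite <- Csin_pi_half_add.
    replace (Chalf - w)%C with (Cone - (Chalf + w))%C by (rewrite <- Chalf_double; ring).
    apply beta_series_reflection; assumption. }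
  match goal with |- Cseries_to ?F _ => set (hyp := F) end.
  assert (Hterm : forall n, hyp n = kappa u v mu *
            (beta_term (Chalf - u) n - beta_term (Chalf + u) n
             + beta_term (Chalf - v) n - beta_term (Chalf + v) n))
    by (intros n; apply hyp_term_partial_fractions; assumption).
  apply (Cseq_to_ext (fun N => kappa u v mu *
           (Cpartial (beta_term (Chalf - u)) N - Cpartial (beta_term (Chalf + u)) N
            + Cpartial (beta_term (Chalf - v)) N - Cpartial (beta_term (Chalf + v)) N))).
  { intros N. rewrite (Cpartial_ext _ _ N Hterm).
    induction N as [|N IH]; [reflexivity |].
    change (Cpartial ?f (S N)) with (Cadd (Cpartial f N) (f (S N))). rewrite <- IH. ring. }
  replace (RtoC PI / Ccos (RtoC PI * u) + RtoC PI / Ccos (RtoC PI * v) - RtoC 2 * (lu + lv))%C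
    with ((RtoC PI / Ccos (RtoC PI * u) - lu) - lu + (RtoC PI / Ccos (RtoC PI * v) - lv) - lv)%C
    by (rewrite RtoC_2; ring).
  refine (Cseq_to_scal _ _ _ _).
  repeat first [refine (Cseq_to_minus _ _ _ _ _ _) | refine (Cseq_to_plus _ _ _ _ _ _)].
  all: first [exact (Hrefl u lu Hu Hlu) | exact Hlu | exact (Hrefl v lv Hv Hlv) | exact Hlv].
Qed.

Lemma odd_int_IZR k : odd_int (RtoC (2 * IZR k - 1)).
Proof.
  destruct (Z_le_gt_dec 1 k).
  - exists (Z.to_nat (k - 1)). left.
    apply Cplx_ext; unfold Cnat, RtoC; cbn [Re Im]; [| reflexivity].
    rewrite INR_IZR_INZ, Nat2Z.inj_add, Nat2Z.inj_mul, Z2Nat.id by lia.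
    rewrite plus_IZR, mult_IZR, minus_IZR. simpl. ring.
  - exists (Z.to_nat (- k)). right. apply Cplx_ext; unfold Cnat, Copp, RtoC; cbn [Re Im]; [| ring].
    rewrite INR_IZR_INZ, Nat2Z.inj_add, Nat2Z.inj_mul, Z2Nat.id by lia.
    rewrite plus_IZR, mult_IZR, opp_IZR. simpl. ring.
Qed.

Lemma Cnot_int_half_add_div x b : b <> Czero -> ~ odd_int (x / b) ->
  Cnot_int (Chalf + x / (RtoC 2 * b)).
Proof.
  intros Hb Hx k E. apply Hx.
  replace (x / b) with (RtoC (2 * IZR k - 1)); [apply odd_int_IZR |].
  transitivity (RtoC 2 * (RtoC (IZR k) - Chalf)).
  - unfold Chalf. apply Cplx_ext; simpl; field.
  - replace x with ((RtoC (IZR k) - Chalf) * (RtoC 2 * b)) by (rewrite <- E; Cfield). Cfield.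
Qed.

Lemma Ccos_ratio z w : Ccos (z + w) <> Czero -> Ccos (z - w) <> Czero ->
  Ccos z * Ccos w / (Ccos (w + w) + Ccos (z + z))
  = (Cone / Ccos (z + w) + Cone / Ccos (z - w)) / RtoC 4.
Proof.
  intros Hp Hm.
  assert (Hnum : Ccos z * Ccos w = (Ccos (z + w) + Ccos (z - w)) / RtoC 2).
  { rewrite <- Ccos_mul_Ccos, RtoC_2. field. Cneq0. }
  assert (Hden : Ccos (w + w) + Ccos (z + z) = RtoC 2 * (Ccos (z + w) * Ccos (z - w))).
  { rewrite Ccos_mul_Ccos.
    replace (z + w + (z - w)) with (z + z) by ring. replace (z + w - (z - w)) with (w + w) by ring.
    ring. }
  rewrite Hnum, Hden, RtoC_2, RtoC_4. field. repeat split; Cneq0.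
Qed.

Definition Q_abc (a b c : Cplx) : Cplx :=
  (b - a - c) * (b + a + c) * (b - a + c) * (b + a - c).
Definition D_abc (a b c : Cplx) : Cplx := a * b ^ 3 - a ^ 3 * b + a * b * c * c.

Lemma param_mu_sq a b c s : b <> Czero -> s * s = a * a - c * c ->
  s / (RtoC 2 * b) * (s / (RtoC 2 * b)) = (a + c) / (RtoC 2 * b) * ((a - c) / (RtoC 2 * b)).
Proof.
  intros Hb Hs. assert (RtoC 2 <> Czero) by Cneq0.
  transitivity (s * s / (RtoC 2 * b * (RtoC 2 * b))); [| rewrite Hs]; field; auto.
Qed.

Lemma param_sum_neq0 a b c : a <> Czero -> b <> Czero ->
  (a + c) / (RtoC 2 * b) + (a - c) / (RtoC 2 * b) <> Czero.
Proof.
  intros Ha Hb. replace ((a + c) / (RtoC 2 * b) + (a - c) / (RtoC 2 * b)) with (a / b)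
    by (rewrite RtoC_2; Cfield).
  intros E. apply Ha. replace a with (a / b * b) by (field; exact Hb). rewrite E. ring.
Qed.

Lemma kappa_value_eq_closed_form a b c mu l :
  let u := (a + c) / (RtoC 2 * b) in
  let v := (a - c) / (RtoC 2 * b) in
  let pi := RtoC PI in
  a <> Czero -> b <> Czero -> mu * mu = u * v ->
  Chalf - mu <> Czero -> Chalf + mu <> Czero ->
  Ccos (pi * u) <> Czero -> Ccos (pi * v) <> Czero ->
  kappa u v mu * (pi / Ccos (pi * u) + pi / Ccos (pi * v) - RtoC 2 * l)
  = pi * Q_abc a b c / (RtoC 2 * D_abc a b c)
      * (Ccos (a * pi / (RtoC 2 * b)) * Ccos (c * pi / (RtoC 2 * b))
         / (Ccos (c * pi / b) + Ccos (a * pi / b)))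
    - Q_abc a b c / (RtoC 4 * D_abc a b c) * l.
Proof.
  intros u v pi Ha Hb Hmu Hm Hp Hcu Hcv.
  assert (H2 : RtoC 2 <> Czero) by Cneq0.
  assert (HD : D_abc a b c = a * b * (RtoC 4 * b * b) * ((Chalf - mu) * (Chalf + mu))).
  { transitivity (a * b * (RtoC 4 * b * b) * (Chalf * Chalf - mu * mu)); [| ring].
    rewrite Hmu. unfold D_abc, u, v, Chalf. simpl Cpow. rewrite RtoC_4, RtoC_2.
    field. split; [exact Hb | Cneq0]. }
  assert (HD0 : D_abc a b c <> Czero)
    by (rewrite HD; repeat apply Cmul_neq0; auto; rewrite RtoC_4; Cneq0).
  replace (c * pi / b) with (c * pi / (RtoC 2 * b) + c * pi / (RtoC 2 * b))
    by (rewrite RtoC_2; Cfield).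
  replace (a * pi / b) with (a * pi / (RtoC 2 * b) + a * pi / (RtoC 2 * b))
    by (rewrite RtoC_2; Cfield).
  rewrite Ccos_ratio.
  all: replace (a * pi / (RtoC 2 * b) + c * pi / (RtoC 2 * b)) with (pi * u)
         by (unfold u; field; split; assumption).
  all: replace (a * pi / (RtoC 2 * b) - c * pi / (RtoC 2 * b)) with (pi * v)
         by (unfold v; field; split; assumption).
  all: try assumption.
  assert (Hm2 : Cone - RtoC 2 * mu <> Czero).
  { replace (Cone - RtoC 2 * mu) with (RtoC 2 * (Chalf - mu)) by (unfold Chalf; field; exact H2).
    apply Cmul_neq0; assumption. }
  assert (Hp2 : Cone + RtoC 2 * mu <> Czero).
  { replace (Cone + RtoC 2 * mu) with (RtoC 2 * (Chalf + mu)) by (unfold Chalf; field; exact H2).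
    apply Cmul_neq0; assumption. }
  assert (Ha2 : a + a <> Czero)
    by (replace (a + a) with (RtoC 2 * a) by (rewrite RtoC_2; ring); apply Cmul_neq0; assumption).
  rewrite HD in *. unfold kappa, Q_abc, u, v, Chalf in *. rewrite RtoC_4, RtoC_2 in *.
  field. repeat split; Cneq0.
Qed.

Theorem mainTheorem6 (a b c s : Cplx)
  (ha : a <> Czero)
  (hb : (0 < Re b)%R)
  (h1 : (0 < Re (b + a + c)%C)%R)
  (h2 : (0 < Re (b + a - c)%C)%R)
  (h3 : (0 < Re (b - a + c)%C)%R)
  (h4 : (0 < Re (b - a - c)%C)%R)
  (hodd1 : ~ odd_int ((a + c) / b))
  (hodd2 : ~ odd_int ((a - c) / b))
  (hs : s * s = a * a - c * c) :
  let mu := s / (RtoC 2 * b) in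
  let half := Cone / RtoC 2 in
  let t1 := half - (a + c) / (RtoC 2 * b) in
  let t2 := half - (a - c) / (RtoC 2 * b) in
  let t3 := half + (a + c) / (RtoC 2 * b) in
  let t4 := half + (a - c) / (RtoC 2 * b) in
  let Q := (b - a - c) * (b + a + c) * (b - a + c) * (b + a - c) in
  let D := a * b ^ 3 - a ^ 3 * b + a * b * c * c in
  let pi := RtoC PI in
  ~ in_Z0m (half + mu) -> ~ in_Z0m (half - mu) ->
  ~ in_Z0m (Cone + t1) -> ~ in_Z0m (Cone + t2) ->
  ~ in_Z0m (Cone + t3) -> ~ in_Z0m (Cone + t4) ->
  exists beta1 beta2 : Cplx,
    Cseries_to (beta_term ((a + b + c) / (RtoC 2 * b))) beta1 /\
    Cseries_to (beta_term ((a + b - c) / (RtoC 2 * b))) beta2 /\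
    Cseries_to
      (hyp_term [Cone; RtoC 3 / RtoC 2 - mu; RtoC 3 / RtoC 2 + mu; t1; t2; t3; t4]
                [half - mu; half + mu; Cone + t1; Cone + t2; Cone + t3; Cone + t4]
                (- Cone))
      (pi * Q / (RtoC 2 * D)
         * (Ccos (a * pi / (RtoC 2 * b)) * Ccos (c * pi / (RtoC 2 * b))
            / (Ccos (c * pi / b) + Ccos (a * pi / b)))
       - Q / (RtoC 4 * D) * (beta1 + beta2)).
Proof.
  intros mu half t1 t2 t3 t4 Q D pi Hp Hm _ _ _ _. change half with Chalf in Hp, Hm.
  assert (Hb : b <> Czero) by (intros E; rewrite E in hb; simpl in hb; lra).
  pose proof (Cnot_int_half_add_div _ _ Hb hodd1) as Hu.
  pose proof (Cnot_int_half_add_div _ _ Hb hodd2) as Hv.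
  destruct (beta_series_converges _ (Cnot_int_not_in_Z0m _ Hu)) as [lu Hlu].
  destruct (beta_series_converges _ (Cnot_int_not_in_Z0m _ Hv)) as [lv Hlv].
  exists lu, lv. split; [| split].
  - replace ((a + b + c) / (RtoC 2 * b)) with (Chalf + (a + c) / (RtoC 2 * b))
      by (unfold Chalf; rewrite RtoC_2; Cfield). exact Hlu.
  - replace ((a + b - c) / (RtoC 2 * b)) with (Chalf + (a - c) / (RtoC 2 * b))
      by (unfold Chalf; rewrite RtoC_2; Cfield). exact Hlv.
  - pose proof (param_mu_sq a b c s Hb hs) as Hmu.
    change Q with (Q_abc a b c). change D with (D_abc a b c). change pi with (RtoC PI).
    rewrite <- (kappa_value_eq_closed_form a b c mu); auto using not_in_Z0m_neq0, Ccos_pi_neq0.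
    apply hyp_7F6_series; auto using param_sum_neq0.
Qed.
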